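(* Let $\nu>0$, $\epsilon\in\{0,1\}$, and $\lambda\neq0$ real. For every smooth solution $U(X,T)$ of $$-2\nu^2U_XU_{XX}+3\epsilon U_XU-\nu^2U_{XXX}U+\tfrac23U_{XXX}-\tfrac23\nu^{5/2}U_{XXX}+\epsilon U_T-\nu^2U_{XXT}=0,\qquad(E_{\nu,\epsilon})$$ the system $$\hat\gamma_X=-\frac{\hat\gamma^2}{2\lambda}-\frac{\epsilon U}{\nu^2}+\frac{\lambda\epsilon}{2\nu^2}+\frac{\epsilon}{3\nu^{3/2}}+U_{XX}-\frac{\epsilon}{3\nu^4},$$ $$\hat\gamma_T=\Big(\frac{U}{2\lambda}-\frac{1}{3\nu^2\lambda}+\frac12+\frac{\sqrt\nu}{3\lambda}\Big)\hat\gamma^2-U_X\hat\gamma-\tfrac23\sqrt\nu\,U_{XX}-\frac{2\epsilon}{9\nu^6}-U_{XX}U+\frac{\epsilon U^2}{\nu^2}-\frac{2\lambda\epsilon}{3\nu^{3/2}}+\frac{2\lambda\epsilon}{3\nu^4}+\frac{\lambda\epsilon U}{2\nu^2}-\frac{\lambda^2\epsilon}{2\nu^2}-\frac{2\epsilon}{9\nu}-\frac{\epsilon U}{3\nu^4}+\frac{4\epsilon}{9\nu^{7/2}}+\frac{\epsilon U}{3\nu^{3/2}}+\frac{2U_{XX}}{3\nu^2}$$ for $\hat\gamma(X,T)$ is completely integrable; that is, $\hat\gamma$ is a quadratic pseudo-potential of $(E_{\nu,\epsilon})$.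
   Context: A real function $\Gamma$ is a pseudo-potential of an equation if there are smooth functions $f,g$ of $\Gamma$, the independent variables, $U$ and finitely many derivatives of $U$ such that $\Omega_\Gamma=d\Gamma-(f\,dX+g\,dT)$ satisfies $d\Omega_\Gamma\equiv0\bmod\Omega_\Gamma$ on every solution (equivalently, $\Gamma_X=f$, $\Gamma_T=g$ is compatible on solutions); it is quadratic if $f,g$ are polynomials of degree at most two in $\Gamma$. *)

From Stdlib Require Import Reals List.
From Coquelicot Require Import Coquelicot.
Open Scope R_scope.

Definition dX (u : R -> R -> R) : R -> R -> R :=
  fun x t => Derive (fun x' => u x' t) x.
Definition dT (u : R -> R -> R) : R -> R -> R :=
  fun x t => Derive (fun t' => u x t') t.

Fixpoint dword (w : list bool) (u : R -> R -> R) : R -> R -> R :=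
  match w with
  | nil => u
  | b :: w' => if b then dX (dword w' u) else dT (dword w' u)
  end.

Definition smooth2 (u : R -> R -> R) : Prop :=
  forall w : list bool,
    (forall x t,
        ex_derive (fun x' => dword w u x' t) x /\
        ex_derive (fun t' => dword w u x t') t) /\
    (forall p : R * R, continuous (fun q : R * R => dword w u (fst q) (snd q)) p).

(* The equation (E_{nu,eps}); nu^{5/2} = nu^2 sqrt nu. *)
Definition is_solution (nu eps : R) (U : R -> R -> R) : Prop :=
  forall x t,
    let u := U x t in
    let ux := dX U x t in
    let uxx := dX (dX U) x t in
    let uxxx := dX (dX (dX U)) x t in
    let ut := dT U x t in
    let uxxt := dT (dX (dX U)) x t in
    - 2 * nu ^ 2 * ux * uxx + 3 * eps * ux * u - nu ^ 2 * uxxx * u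
    + 2 / 3 * uxxx - 2 / 3 * (nu ^ 2 * sqrt nu) * uxxx
    + eps * ut - nu ^ 2 * uxxt = 0.

(* Right-hand side f of  gamma_X = f  (nu^{3/2} = nu sqrt nu). *)
Definition fX (nu eps lam : R) (g u uxx : R) : R :=
  - g ^ 2 / (2 * lam) - eps * u / nu ^ 2 + lam * eps / (2 * nu ^ 2)
  + eps / (3 * (nu * sqrt nu)) + uxx - eps / (3 * nu ^ 4).

(* Right-hand side g of  gamma_T = g  (nu^{7/2} = nu^3 sqrt nu). *)
Definition gT (nu eps lam : R) (g u ux uxx : R) : R :=
  (u / (2 * lam) - 1 / (3 * nu ^ 2 * lam) + 1 / 2 + sqrt nu / (3 * lam)) * g ^ 2
  - ux * g - 2 / 3 * sqrt nu * uxx - 2 * eps / (9 * nu ^ 6) - uxx * u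
  + eps * u ^ 2 / nu ^ 2 - 2 * lam * eps / (3 * (nu * sqrt nu))
  + 2 * lam * eps / (3 * nu ^ 4) + lam * eps * u / (2 * nu ^ 2)
  - lam ^ 2 * eps / (2 * nu ^ 2) - 2 * eps / (9 * nu) - eps * u / (3 * nu ^ 4)
  + 4 * eps / (9 * (nu ^ 3 * sqrt nu)) + eps * u / (3 * (nu * sqrt nu))
  + 2 * uxx / (3 * nu ^ 2).

(* Complete integrability (Frobenius compatibility) of the system
     Gamma_X = F(X,T,Gamma),  Gamma_T = G(X,T,Gamma):
   dF/dT + dF/dGamma * G = dG/dX + dG/dGamma * F  for all X, T, Gamma. *)
Definition compatible (F G : R -> R -> R -> R) : Prop :=
  forall x t g,
    Derive (fun t' => F x t' g) t + Derive (fun g' => F x t g') g * G x t g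
    = Derive (fun x' => G x' t g) x + Derive (fun g' => G x t g') g * F x t g.

Definition Fsys (nu eps lam : R) (U : R -> R -> R) : R -> R -> R -> R :=
  fun x t g => fX nu eps lam g (U x t) (dX (dX U) x t).
Definition Gsys (nu eps lam : R) (U : R -> R -> R) : R -> R -> R -> R :=
  fun x t g => gT nu eps lam g (U x t) (dX U x t) (dX (dX U) x t).

From Stdlib Require Import Reals Lra.
From Coquelicot Require Import Coquelicot.
Open Scope R_scope.

(* By the chain rule, F_T + F_gamma G - G_X - G_gamma F is a polynomial in gamma, U and
   the derivatives of U, with coefficients rational in nu, sqrt nu and lam.  It is identically
   equal to -E / nu^2, where E = 0 is the equation (E_{nu,eps}), so it vanishes on solutions. *)

Definition equation_lhs (nu eps u ux uxx uxxx ut uxxt : R) : R :=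
  - 2 * nu ^ 2 * ux * uxx + 3 * eps * ux * u - nu ^ 2 * uxxx * u
  + 2 / 3 * uxxx - 2 / 3 * (nu ^ 2 * sqrt nu) * uxxx
  + eps * ut - nu ^ 2 * uxxt.

Lemma is_solutionE (nu eps : R) (U : R -> R -> R) (x t : R) :
  is_solution nu eps U ->
  equation_lhs nu eps (U x t) (dX U x t) (dX (dX U) x t) (dX (dX (dX U)) x t)
    (dT U x t) (dT (dX (dX U)) x t) = 0.
Proof. intros HE; exact (HE x t). Qed.

Lemma smooth2_is_derive_dX (U : R -> R -> R) (w : list bool) (x t : R) :
  smooth2 U -> is_derive (fun x' => dword w U x' t) x (dX (dword w U) x t).
Proof. intros HS; apply Derive_correct, (proj1 (HS w) x t). Qed.

Lemma smooth2_is_derive_dT (U : R -> R -> R) (w : list bool) (x t : R) :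
  smooth2 U -> is_derive (fun t' => dword w U x t') t (dT (dword w U) x t).
Proof. intros HS; apply Derive_correct, (proj1 (HS w) x t). Qed.

Section Derivatives.
Variables nu eps lam : R.
Hypothesis nu_gt0 : 0 < nu.
Hypothesis lam_neq0 : lam <> 0.

Definition gT_gamma2_coef (u : R) : R :=
  u / (2 * lam) - 1 / (3 * nu ^ 2 * lam) + 1 / 2 + sqrt nu / (3 * lam).

Definition gT_du (g u uxx : R) : R :=
  g ^ 2 / (2 * lam) - uxx + 2 * eps * u / nu ^ 2 + lam * eps / (2 * nu ^ 2)
  - eps / (3 * nu ^ 4) + eps / (3 * (nu * sqrt nu)).

Definition gT_duxx (u : R) : R := - 2 / 3 * sqrt nu - u + 2 / (3 * nu ^ 2).

Lemma is_derive_fX_gamma (g u uxx : R) :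
  is_derive (fun g' : R => fX nu eps lam g' u uxx) g (- g / lam).
Proof. unfold fX; auto_derive; [exact I | field; auto]. Qed.

Lemma is_derive_gT_gamma (g u ux uxx : R) :
  is_derive (fun g' : R => gT nu eps lam g' u ux uxx) g (2 * gT_gamma2_coef u * g - ux).
Proof. unfold gT, gT_gamma2_coef; auto_derive; [exact I | field; lra]. Qed.

Lemma is_derive_fX_comp (g : R) (u uxx : R -> R) (t du duxx : R) :
  is_derive u t du -> is_derive uxx t duxx ->
  is_derive (fun t' : R => fX nu eps lam g (u t') (uxx t')) t (- eps / nu ^ 2 * du + duxx).
Proof.
  intros Hu Huxx; unfold fX; auto_derive.
  - repeat split; eexists; eassumption.
  - rewrite (is_derive_unique (fun t' : R => u t') t du Hu),
      (is_derive_unique (fun t' : R => uxx t') t duxx Huxx).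
    field; lra.
Qed.

Lemma is_derive_gT_comp (g : R) (u ux uxx : R -> R) (x du dux duxx : R) :
  is_derive u x du -> is_derive ux x dux -> is_derive uxx x duxx ->
  is_derive (fun x' : R => gT nu eps lam g (u x') (ux x') (uxx x')) x
    (gT_du g (u x) (uxx x) * du - g * dux + gT_duxx (u x) * duxx).
Proof.
  intros Hu Hux Huxx; unfold gT; auto_derive.
  - repeat split; eexists; eassumption.
  - rewrite (is_derive_unique (fun x' : R => u x') x du Hu),
      (is_derive_unique (fun x' : R => ux x') x dux Hux),
      (is_derive_unique (fun x' : R => uxx x') x duxx Huxx).
    pose proof (sqrt_lt_R0 nu nu_gt0).
    unfold gT_du, gT_duxx; field; repeat split; lra.
Qed.

Lemma compatibility_defect (g u ux uxx uxxx ut uxxt : R) :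
  (- eps / nu ^ 2 * ut + uxxt) + - g / lam * gT nu eps lam g u ux uxx
  - (gT_du g u uxx * ux - g * uxx + gT_duxx u * uxxx
     + (2 * gT_gamma2_coef u * g - ux) * fX nu eps lam g u uxx)
  = - equation_lhs nu eps u ux uxx uxxx ut uxxt / nu ^ 2.
Proof.
  unfold fX, gT, gT_du, gT_duxx, gT_gamma2_coef, equation_lhs.
  pose proof (sqrt_lt_R0 nu nu_gt0) as s_gt0.
  pose proof (sqrt_sqrt nu (Rlt_le _ _ nu_gt0)) as s_sq.
  generalize dependent (sqrt nu); intros s s_gt0 s_sq; subst nu.
  field; repeat split; lra.
Qed.

End Derivatives.

Theorem theorem4 (nu eps lam : R) (U : R -> R -> R) :
  0 < nu -> (eps = 0 \/ eps = 1) -> lam <> 0 ->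
  smooth2 U -> is_solution nu eps U ->
  compatible (Fsys nu eps lam U) (Gsys nu eps lam U).
Proof.
  intros Hnu _ Hlam HS HE x t g; unfold Fsys, Gsys.
  rewrite (is_derive_unique _ _ _ (is_derive_fX_comp nu eps lam Hnu g
             (fun t' => U x t') (fun t' => dX (dX U) x t') t _ _
             (smooth2_is_derive_dT U nil x t HS)
             (smooth2_is_derive_dT U (true :: true :: nil) x t HS))).
  rewrite (is_derive_unique _ _ _ (is_derive_gT_comp nu eps lam Hnu Hlam g
             (fun x' => U x' t) (fun x' => dX U x' t) (fun x' => dX (dX U) x' t) x _ _ _
             (smooth2_is_derive_dX U nil x t HS)
             (smooth2_is_derive_dX U (true :: nil) x t HS)
             (smooth2_is_derive_dX U (true :: true :: nil) x t HS))).
  rewrite (is_derive_unique _ _ _ (is_derive_fX_gamma nu eps lam Hlam g _ _)),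
    (is_derive_unique _ _ _ (is_derive_gT_gamma nu eps lam Hnu Hlam g _ _ _)).
  apply Rminus_diag_uniq.
  rewrite (compatibility_defect nu eps lam Hnu Hlam); cbn [dword].
  rewrite (is_solutionE nu eps U x t HE).
  unfold Rdiv; ring.
Qed.
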